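(* Let $f(x)=\mathbb{E}_\xi f_\xi(x)$ where $f_\xi:\mathbb{R}^d\to\mathbb{R}$ is almost surely convex and $L$-smooth, let $x^*$ be the fixed optimum of the composite problem, and assume $\sigma_*^2:=\mathbb{E}_\xi\|\nabla f_\xi(x^* )-\nabla f(x^* )\|^2<+\infty$. Consider SGD, $v^t=\nabla f_{\xi^t}(x^t)$, where $\xi^t$ is a copy of $\xi$ independent of $x^t$ and of the past, run for at most $t_0$ iterations. Then it satisfies part (a) of the gradient-estimator condition with $\eta_0=\frac1{4L}$, $\omega=1$ and $\mathcal M^t=2\eta^2(t_0-t)\sigma_*^2$ for $t=0,\dots,t_0$. If $f$ is strongly convex and $\sigma_*=0$, it satisfies part (b) with $\eta_0=\frac1{2L}$, $\omega=1$ and $\mathcal M^t=0$.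
   Context: $L$-smoothness: $h(x)\le h(y)+\langle\nabla h(y),x-y\rangle+\frac L2\|x-y\|^2$; $\mu$-strong convexity: $f(x)\ge f(y)+\langle\nabla f(y),x-y\rangle+\frac\mu2\|x-y\|^2$. Bregman divergence $D_f(x,y):=f(x)-f(y)-\langle\nabla f(y),x-y\rangle$. Gradient-estimator condition: with $w^t:=x^t-\eta v^t$, $w^*:=x^*-\eta\nabla f(x^* )$, there are $\eta_0>0$, $\omega>0$ and a nonnegative sequence $\{\mathcal M^t\}$ such that for any $\eta\le\eta_0$ and each $t$: (a) if $f$ is convex, $\mathbb{E}\|w^t-w^*\|^2+\mathcal M^{t+1}\le\mathbb{E}\|x^t-x^*\|^2-\omega\eta\mathbb{E}D_f(x^t,x^* )+\mathcal M^t$; (b) if $f$ is $\mu$-strongly convex, either $\mathcal M^t\equiv0$ or for some $\rho>0$, $\mathbb{E}\|w^t-w^*\|^2+\mathcal M^{t+1}\le(1-\omega\eta\mu)\mathbb{E}\|x^t-x^*\|^2+(1-\rho)\mathcal M^t$. In case (b) with $\mathcal M^t\equiv0$ this reads $\mathbb{E}\|w^t-w^*\|^2\le(1-\omega\eta\mu)\mathbb{E}\|x^t-x^*\|^2$. *)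

From HB Require Import structures.
From mathcomp Require Import all_boot all_order all_algebra.
From mathcomp Require Import all_classical all_reals all_analysis.
Set Implicit Arguments. Unset Strict Implicit. Unset Printing Implicit Defensive.
Import Order.TTheory GRing.Theory Num.Theory.
Import numFieldNormedType.Exports.
Local Open Scope ring_scope.

Definition dotv (R : realType) (d : nat) (u v : 'rV[R]_d) : R :=
  \sum_(i < d) u ord0 i * v ord0 i.
Definition sqnorm (R : realType) (d : nat) (v : 'rV[R]_d) : R := dotv v v.

Definition gradient_of (R : realType) (d : nat) (h : 'rV[R]_d -> R)
  (g : 'rV[R]_d -> 'rV[R]_d) : Prop :=
  forall x, differentiable h x /\ forall v, 'D_v h x = dotv (g x) v.

Definition convex_fun (R : realType) (d : nat) (h : 'rV[R]_d -> R) : Prop :=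
  forall (x y : 'rV[R]_d) (l : R), 0 <= l <= 1 ->
    h (l *: x + (1 - l) *: y) <= l * h x + (1 - l) * h y.

Definition L_smooth (R : realType) (d : nat) (L : R) (h : 'rV[R]_d -> R)
  (g : 'rV[R]_d -> 'rV[R]_d) : Prop :=
  forall x y, h x <= h y + dotv (g y) (x - y) + L / 2 * sqnorm (x - y).

Definition strongly_convex (R : realType) (d : nat) (mu : R) (h : 'rV[R]_d -> R)
  (g : 'rV[R]_d -> 'rV[R]_d) : Prop :=
  forall x y, h y + dotv (g y) (x - y) + mu / 2 * sqnorm (x - y) <= h x.

Definition bregman (R : realType) (d : nat) (h : 'rV[R]_d -> R)
  (g : 'rV[R]_d -> 'rV[R]_d) (x y : 'rV[R]_d) : R :=
  h x - h y - dotv (g y) (x - y).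

From HB Require Import structures.
From mathcomp Require Import all_boot all_order all_algebra.
From mathcomp Require Import all_classical all_reals all_analysis.
From mathcomp Require Import measurable_realfun.
From mathcomp Require Import ring lra.
Set Implicit Arguments. Unset Strict Implicit. Unset Printing Implicit Defensive.
Import Order.TTheory GRing.Theory Num.Theory.
Import numFieldNormedType.Exports.
Local Open Scope classical_set_scope.
Local Open Scope ring_scope.

(* Co-coercivity of a convex L-smooth f_xi,
     |grad f_xi(x) - grad f_xi(xstar)|^2 <= 2L D_{f_xi}(xstar, x),
   together with |a + b|^2 <= 2|a|^2 + 2|b|^2, gives for eta <= 1/(2L)
     |x - eta grad f_xi(x) - (xstar - eta grad f(xstar))|^2 <= |x - xstar|^2
        - 2 eta (f_xi(x) - f_xi(xstar) - <grad f(xstar), x - xstar>)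
        + 2 eta^2 |grad f_xi(xstar) - grad f(xstar)|^2.
   Averaging over xi turns the middle term into -2 eta D_f(x, xstar) and the
   last one into 2 eta^2 sigma_*^2.  Averaging over x^t then gives (a), after
   dropping half of the nonnegative term 2 eta D_f(x^t, xstar), and (b), since
   strong convexity gives D_f(x, xstar) >= mu/2 |x - xstar|^2. *)

Section inner_product.
Context (R : realType) (d : nat).
Implicit Types (u v w : 'rV[R]_d).

Lemma dotvC u v : dotv u v = dotv v u.
Proof. by apply: eq_bigr => i _; rewrite mulrC. Qed.

Lemma dotvDl u v w : dotv (u + v) w = dotv u w + dotv v w.
Proof. by rewrite /dotv -big_split; apply: eq_bigr => i _; rewrite mxE mulrDl. Qed.

Lemma dotvNl u w : dotv (- u) w = - dotv u w.
Proof. by rewrite /dotv -sumrN; apply: eq_bigr => i _; rewrite mxE mulNr. Qed.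

Lemma dotvZl k u w : dotv (k *: u) w = k * dotv u w.
Proof. by rewrite /dotv mulr_sumr; apply: eq_bigr => i _; rewrite mxE mulrA. Qed.

Lemma dotvBl u v w : dotv (u - v) w = dotv u w - dotv v w.
Proof. by rewrite dotvDl dotvNl. Qed.

Lemma dotvBr u v w : dotv w (u - v) = dotv w u - dotv w v.
Proof. by rewrite dotvC dotvBl !(dotvC w). Qed.

Lemma dotvNr u w : dotv w (- u) = - dotv w u.
Proof. by rewrite dotvC dotvNl dotvC. Qed.

Lemma dotvZr k u w : dotv w (k *: u) = k * dotv w u.
Proof. by rewrite dotvC dotvZl dotvC. Qed.

Lemma sqnorm_ge0 u : 0 <= sqnorm u.
Proof. by apply: sumr_ge0 => i _; rewrite -expr2 sqr_ge0. Qed.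

Lemma sqnormN u : sqnorm (- u) = sqnorm u.
Proof. by rewrite /sqnorm dotvNl dotvNr opprK. Qed.

Lemma sqnormZ k u : sqnorm (k *: u) = k ^+ 2 * sqnorm u.
Proof. by rewrite /sqnorm dotvZl dotvZr mulrA expr2. Qed.

Lemma sqnormB u v : sqnorm (u - v) = sqnorm u - 2 * dotv u v + sqnorm v.
Proof. rewrite /sqnorm !dotvBl !dotvBr (dotvC v u); ring. Qed.

Lemma sqnormD_le u v : sqnorm (u + v) <= 2 * sqnorm u + 2 * sqnorm v.
Proof.
have := sqnorm_ge0 (u - v).
have -> : u + v = u - - v by rewrite opprK.
rewrite !sqnormB sqnormN dotvNr.
lra.
Qed.

End inner_product.

Section first_order.
Context (R : realType) (d : nat).
Implicit Types (h : 'rV[R]_d -> R) (g : 'rV[R]_d -> 'rV[R]_d).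

Lemma cvg_at_right0_le (q : R -> R) (l C : R) :
  q s @[s --> 0^'] --> l -> (forall s, 0 < s <= 1 -> q s <= C) -> l <= C.
Proof.
move=> /cvg_dnbhs_at_right ql qC.
apply: (closed_cvg (fun r => r <= C) (@closed_le _ C) _ _ ql).
near=> s; apply: qC; apply/andP; split.
  by near: s; exact: nbhs_right_gt.
by near: s; apply: nbhs_right_le; exact: ltr01.
Unshelve. all: by end_near.
Qed.

Lemma convex_gradient_le h g x y :
  convex_fun h -> gradient_of h g -> h y + dotv (g y) (x - y) <= h x.
Proof.
move=> hc /(_ y)[hd hD].
have /cvg_ex[/= l hl] := @diff_derivable _ _ _ _ _ (x - y) hd.
have -> : dotv (g y) (x - y) = l by rewrite -hD /derive; exact: cvg_lim.
rewrite -lerBrDl.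
apply: (@cvg_at_right0_le (fun s => s^-1 *: (h (s *: (x - y) + y) - h y)) _ _ hl).
move=> s /andP[s0 s1].
have := hc x y s; rewrite s1 ltW //= => /(_ isT).
have -> : s *: x + (1 - s) *: y = s *: (x - y) + y.
  by rewrite scalerBl scale1r scalerBr addrA addrAC.
rewrite /GRing.scale /= ler_pdivrMl //; lra.
Qed.

(* Compare the first-order lower bound at x with the quadratic upper bound at
   y, both evaluated at the minimiser z = y - (g y - g x) / L of the latter. *)
Lemma smooth_bregman_ge h g (L : R) x y :
  0 < L -> convex_fun h -> gradient_of h g -> L_smooth L h g ->
  sqnorm (g x - g y) / (2 * L) <= bregman h g y x.
Proof.
move=> L0 hc hg hs.
set w := g y - g x; pose z := y - L^-1 *: w.
have lower := convex_gradient_le z x hc hg.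
have upper := hs z y.
have zx : z - x = (y - x) - L^-1 *: w by rewrite /z addrAC.
have zy : z - y = - (L^-1 *: w) by rewrite /z addrAC subrr add0r.
rewrite zx dotvBr dotvZr in lower; rewrite zy dotvNr dotvZr sqnormN sqnormZ in upper.
have sw : sqnorm w = dotv (g y) w - dotv (g x) w by rewrite /sqnorm {1}/w dotvBl.
have -> : sqnorm (g x - g y) / (2 * L) = L^-1 * sqnorm w / 2.
  by rewrite -sqnormN opprB; field; rewrite gt_eqF.
have quad : L / 2 * (L^-1 ^+ 2 * sqnorm w) = L^-1 * sqnorm w / 2.
  by field; rewrite gt_eqF.
rewrite quad in upper; rewrite sw in upper *.
rewrite /bregman; lra.
Qed.

Lemma gradient_step_le h g (L eta : R) x y c :
  0 < L -> 0 < eta -> eta <= 1 / (2 * L) ->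
  convex_fun h -> gradient_of h g -> L_smooth L h g ->
  sqnorm ((x - eta *: g x) - (y - eta *: c)) <=
  sqnorm (x - y) - 2 * eta * (h x - h y - dotv c (x - y))
    + 2 * eta ^+ 2 * sqnorm (g y - c).
Proof.
move=> L0 eta0 etaL hc hg hs.
have coco := smooth_bregman_ge x y L0 hc hg hs.
have -> : (x - eta *: g x) - (y - eta *: c)
    = (x - y) - eta *: ((g x - g y) + (g y - c)).
  by apply/rowP => i; rewrite !mxE; ring.
rewrite sqnormB sqnormZ dotvZr dotvC dotvDl !dotvBl.
have split_le := sqnormD_le (g x - g y) (g y - c).
set P := sqnorm (g x - g y) in coco split_le *.
have etaP : eta * P <= P / (2 * L).
  by rewrite mulrC ler_wpM2l ?sqnorm_ge0 // -div1r.
have eta_etaP := ler_wpM2l (ltW eta0) etaP.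
have eta_coco := ler_wpM2l (ltW eta0) coco.
have eta2_split := ler_wpM2l (sqr_ge0 eta) split_le.
have bregman_yx : bregman h g y x = h y - h x + dotv (g x) (x - y).
  by rewrite /bregman -[y - x]opprB dotvNr opprK.
rewrite bregman_yx in eta_coco; lra.
Qed.

End first_order.

Section rV_measurable.
Context (dT : measure_display) (T : measurableType dT) (R : realType) (n : nat).
Implicit Types (V W : T -> 'rV[R]_n).

Definition rV_measurable V := forall i, measurable_fun setT (fun t => V t ord0 i).

Lemma rV_measurable_cst (a : 'rV[R]_n) : rV_measurable (fun=> a).
Proof. by move=> i; exact: measurable_cst. Qed.

Lemma rV_measurableB V W :
  rV_measurable V -> rV_measurable W -> rV_measurable (fun t => V t - W t).
Proof.
move=> mV mW i; rewrite (_ : (fun t => _) = fun t => V t ord0 i - W t ord0 i).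
  exact: measurable_funB.
by apply/funext => t; rewrite !mxE.
Qed.

Lemma rV_measurableZ (k : R) V : rV_measurable V -> rV_measurable (fun t => k *: V t).
Proof.
move=> mV i; rewrite (_ : (fun t => _) = fun t => k * V t ord0 i).
  exact: measurable_funM.
by apply/funext => t; rewrite !mxE.
Qed.

Lemma measurable_sqnorm V : rV_measurable V -> measurable_fun setT (fun t => sqnorm (V t)).
Proof. by move=> mV; apply: measurable_sum => i; exact: measurable_funM. Qed.

End rV_measurable.

(* No measurability is assumed: these follow from the definition of the
   integral of a nonnegative function as a supremum over simple functions. *)
Section ge0_integral.
Local Open Scope ereal_scope.
Context (dT : measure_display) (T : measurableType dT) (R : realType).
Variable mu : {measure set T -> \bar R}.
Import HBNNSimple.

Lemma le_ge0_integral (f g : T -> \bar R) :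
  (forall x, 0 <= f x) -> (forall x, f x <= g x) ->
  \int[mu]_x f x <= \int[mu]_x g x.
Proof.
move=> f0 fg; rewrite !ge0_integralTE //; last by move=> x; exact: le_trans (f0 x) (fg x).
apply: ereal_sup_le => _ [h hf <-]; exists h => //= x.
exact: le_trans (hf x) (fg x).
Qed.

Lemma le_ge0_integralZl (a : R) (f : T -> \bar R) : (0 <= a)%R ->
  (forall x, 0 <= f x) -> a%:E * \int[mu]_x f x <= \int[mu]_x (a%:E * f x).
Proof.
move=> a0 f0; have [->|a_neq0] := eqVneq a 0%R.
  by rewrite mul0e integral_ge0 // => x _; rewrite mul0e.
have a_gt0 : (0 < a)%R by rewrite lt_def a_neq0.
rewrite -lee_pdivlMl // [X in X <= _]ge0_integralTE //.
apply: ge_ereal_sup => _ [k kf <-]; rewrite lee_pdivlMl // -sintegralrM.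
rewrite ge0_integralTE; last by move=> x; rewrite mule_ge0.
apply: ereal_sup_ubound; exists (scale_nnsfun k (ltW a_gt0)) => //= x.
by rewrite EFinM lee_pmul2l ?lte_fin.
Qed.

Lemma ge0_integral_superadditive (f g h : T -> \bar R) :
  (forall x, 0 <= f x) -> (forall x, 0 <= g x) -> (forall x, f x + g x <= h x) ->
  \int[mu]_x f x + \int[mu]_x g x <= \int[mu]_x h x.
Proof.
move=> f0 g0 fgh.
have h0 x : 0 <= h x by apply: le_trans _ (fgh x); rewrite adde_ge0.
rewrite !ge0_integralTE //.
set Ih := (X in _ <= X).
have simple_le (s k : {nnsfun T >-> R}) : (forall x, (s x)%:E <= f x) ->
    (forall x, (k x)%:E <= g x) -> sintegral mu s + sintegral mu k <= Ih.
  move=> sf kg; rewrite -sintegralD; apply: ereal_sup_ubound.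
  exists (add_nnsfun s k) => //= x.
  by rewrite EFinD; apply: le_trans _ (fgh x); exact: leeD.
have [->|Ih_fin] := eqVneq Ih +oo; first by rewrite leey.
have Ih_num : Ih \is a fin_num.
  rewrite ge0_fin_numE ?lt_neqAle ?Ih_fin ?leey //.
  apply: ereal_sup_ubound; exists nnsfun0; last exact: sintegral0.
  by move=> x /=; rewrite h0.
rewrite addeC -lee_suber_addr //; apply: ge_ereal_sup => _ [k kg <-] /=.
rewrite lee_suber_addr // addeC -lee_suber_addr //.
apply: ge_ereal_sup => _ [s sf <-] /=.
by rewrite lee_suber_addr //; exact: simple_le.
Qed.

End ge0_integral.

Section EFin_integral.
Context (dT : measure_display) (T : measurableType dT) (R : realType).
Variable mu : {measure set T -> \bar R}.
Implicit Types f g : T -> R.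

Lemma EFin_integrableD f g : mu.-integrable setT (EFin \o f) ->
  mu.-integrable setT (EFin \o g) -> mu.-integrable setT (EFin \o (fun x => f x + g x)).
Proof.
move=> fi gi; apply: (eq_integrable _ ((EFin \o f) \+ (EFin \o g))) => //.
exact: integrableD.
Qed.

Lemma EFin_integrableZl (k : R) f : mu.-integrable setT (EFin \o f) ->
  mu.-integrable setT (EFin \o (fun x => k * f x)).
Proof.
move=> fi; apply: (eq_integrable _ (fun x => k%:E * (EFin \o f) x)%E) => //.
exact: integrableZl.
Qed.

Lemma ge0_EFin_integrable f : measurable_fun setT f -> (forall x, 0 <= f x) ->
  (\int[mu]_x (f x)%:E < +oo)%E -> mu.-integrable setT (EFin \o f).
Proof.
move=> mf f0 fi; apply/integrableP; split; first exact/measurable_EFinP.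
rewrite (eq_integral (fun x => (f x)%:E)) // => x _.
by rewrite /comp gee0_abs // lee_fin.
Qed.

Lemma ae_ge0_integral_maxr f : measurable_fun setT f -> {ae mu, forall x, 0 <= f x} ->
  (\int[mu]_x (f x)%:E = \int[mu]_x (Num.max (f x) 0)%:E)%E.
Proof.
move=> mf f0; apply: ae_eq_integral => //.
- exact/measurable_EFinP.
- by apply/measurable_EFinP; apply: measurable_maxr => //; exact: measurable_cst.
- by apply: filterS f0 => x fx0 _; congr EFin; apply/esym/max_idPl.
Qed.

Lemma ae_le_Rintegral f g : mu.-integrable setT (EFin \o f) ->
  mu.-integrable setT (EFin \o g) -> {ae mu, forall x, f x <= g x} ->
  Rintegral mu setT f <= Rintegral mu setT g.
Proof.
move=> fi gi fg; rewrite -subr_ge0 -RintegralB //.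
have gfi : mu.-integrable setT (EFin \o (fun x => g x - f x)).
  by apply: (eq_integrable _ ((EFin \o g) \- (EFin \o f))%E) => //; exact: integrableB.
have mgf : measurable_fun setT (fun x => g x - f x).
  exact/measurable_EFinP/(measurable_int mu gfi).
rewrite /Rintegral ae_ge0_integral_maxr //; last by apply: filterS fg => x; rewrite subr_ge0.
by apply: fine_ge0; apply: integral_ge0 => x _; rewrite lee_fin le_max lexx orbT.
Qed.

Lemma integral_le_Rintegral f g : measurable_fun setT f -> (forall x, 0 <= f x) ->
  mu.-integrable setT (EFin \o g) -> {ae mu, forall x, f x <= g x} ->
  (\int[mu]_x (f x)%:E <= (Rintegral mu setT g)%:E)%E.
Proof.
move=> mf f0 gi fg.
have mg : measurable_fun setT g by exact/measurable_EFinP/(measurable_int mu gi).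
have g0 : {ae mu, forall x, 0 <= g x} by apply: filterS fg => x; exact: le_trans.
rewrite /Rintegral fineK; last exact: integrable_fin_num.
rewrite (ae_ge0_integral_maxr mg g0); apply: ae_ge0_le_integral => //.
- by move=> x _; rewrite lee_fin.
- exact/measurable_EFinP.
- by move=> x _; rewrite lee_fin le_max lexx orbT.
- by apply/measurable_EFinP; apply: measurable_maxr => //; exact: measurable_cst.
- by apply: filterS fg => x fgx _; rewrite lee_fin le_max fgx.
Qed.

End EFin_integral.

Lemma convex_Rintegral (R : realType) (d : nat) (dX : measure_display)
    (X : measurableType dX) (mu : {measure set X -> \bar R})
    (F : X -> 'rV[R]_d -> R) :
  (forall x, mu.-integrable setT (fun xi => (F xi x)%:E)) ->
  {ae mu, forall xi, convex_fun (F xi)} ->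
  convex_fun (fun x => Rintegral mu setT (fun xi => F xi x)).
Proof.
move=> F_int F_convex x y l l01.
have F_intZ k w : mu.-integrable setT (EFin \o (fun xi => k * F xi w)).
  exact: EFin_integrableZl (F_int w).
have -> : l * Rintegral mu setT (fun xi => F xi x)
          + (1 - l) * Rintegral mu setT (fun xi => F xi y)
        = Rintegral mu setT (fun xi => l * F xi x + (1 - l) * F xi y).
  by rewrite RintegralD // !RintegralZl //; exact: F_int.
apply: ae_le_Rintegral; [exact: F_int | exact: EFin_integrableD |].
by apply: filterS F_convex => xi; exact.
Qed.

Lemma ge0_fin_num_le (R : realType) (u v : \bar R) :
  (0 <= u)%E -> (u <= v)%E -> v \is a fin_num -> u \is a fin_num.
Proof.
by move=> u0 uv /fin_numPlt/andP[_ vy]; rewrite ge0_fin_numE // (le_lt_trans uv vy).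
Qed.

Section sgd.
Context (R : realType) (d : nat).
Context (dXi : measure_display) (Xi : measurableType dXi) (Q : probability Xi R).
Context (dO : measure_display) (Om : measurableType dO) (P : probability Om R).
Variables (F : Xi -> 'rV[R]_d -> R) (gF : Xi -> 'rV[R]_d -> 'rV[R]_d).
Variables (L : R) (t0 : nat) (xstar : 'rV[R]_d) (G : 'rV[R]_d -> 'rV[R]_d).
Hypothesis L_gt0 : 0 < L.
Hypothesis gF_measurable : forall x, rV_measurable (fun xi => gF xi x).
Hypothesis F_ae : {ae Q, forall xi, convex_fun (F xi) /\ gradient_of (F xi) (gF xi) /\
                                    L_smooth L (F xi) (gF xi)}.
Hypothesis F_integrable : forall x, Q.-integrable setT (fun xi => (F xi x)%:E).
Hypothesis f_gradient : gradient_of (fun x => Rintegral Q setT (fun xi => F xi x)) G.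
Hypothesis sigma2_finite : (\int[Q]_xi (sqnorm (gF xi xstar - G xstar))%:E < +oo)%E.

Let f x := Rintegral Q setT (fun xi => F xi x).
Let sigma2 := fine (\int[Q]_xi (sqnorm (gF xi xstar - G xstar))%:E).

Lemma bregman_ge0 x : 0 <= bregman f G x xstar.
Proof.
have f_convex : convex_fun f.
  by apply: convex_Rintegral => //; apply: filterS F_ae => xi [].
by have := convex_gradient_le x xstar f_convex f_gradient; rewrite /bregman; lra.
Qed.

Lemma expected_step_le eta x : 0 < eta -> eta <= 1 / (2 * L) ->
  (\int[Q]_xi (sqnorm ((x - eta *: gF xi x) - (xstar - eta *: G xstar)))%:E <=
   (sqnorm (x - xstar) - 2 * eta * bregman f G x xstar + 2 * eta ^+ 2 * sigma2)%:E)%E.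
Proof.
move=> eta0 etaL.
pose S xi := sqnorm (gF xi xstar - G xstar).
pose a := sqnorm (x - xstar) + 2 * eta * dotv (G xstar) (x - xstar).
pose r xi := a + (2 * eta * F xi xstar + (- (2 * eta) * F xi x + 2 * eta ^+ 2 * S xi)).
have S_int : Q.-integrable setT (EFin \o S).
  apply: ge0_EFin_integrable => // [|xi]; last exact: sqnorm_ge0.
  by apply: measurable_sqnorm; apply: rV_measurableB => //; exact: rV_measurable_cst.
have F_int y : Q.-integrable setT (EFin \o (fun xi => F xi y)) := F_integrable y.
have F_intZ k y := EFin_integrableZl k (F_int y).
have S_intZ := EFin_integrableZl (2 * eta ^+ 2) S_int.
have Rintegral_r : Rintegral Q setT r
    = a + (2 * eta * f xstar + (- (2 * eta) * f x + 2 * eta ^+ 2 * sigma2)).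
  rewrite /r RintegralD //; last 2 first.
  - exact: finite_measure_integrable_cst.
  - by apply: EFin_integrableD => //; exact: EFin_integrableD.
  have Q1 : fine (Q setT) = 1 := congr1 fine (probability_setT Q).
  rewrite Rintegral_cst // Q1 mulr1.
  rewrite RintegralD //; last exact: EFin_integrableD.
  by rewrite RintegralD // !RintegralZl.
have -> : sqnorm (x - xstar) - 2 * eta * bregman f G x xstar + 2 * eta ^+ 2 * sigma2
          = Rintegral Q setT r.
  by rewrite Rintegral_r /bregman /a; ring.
apply: integral_le_Rintegral.
- apply: measurable_sqnorm; apply: rV_measurableB; last exact: rV_measurable_cst.
  by apply: rV_measurableB; [exact: rV_measurable_cst | exact: rV_measurableZ].
- by move=> xi; exact: sqnorm_ge0.
- apply: EFin_integrableD; first exact: finite_measure_integrable_cst.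
  by apply: EFin_integrableD => //; exact: EFin_integrableD.
- apply: filterS F_ae => xi [Fc [Fg Fs]].
  have := gradient_step_le x xstar (G xstar) L_gt0 eta0 etaL Fc Fg Fs.
  by rewrite /r /a /S; lra.
Qed.

Let Ew eta (X : Om -> 'rV[R]_d) := (\int[P]_om \int[Q]_xi
  (sqnorm ((X om - eta *: gF xi (X om)) - (xstar - eta *: G xstar)))%:E)%E.
Let Ex (X : Om -> 'rV[R]_d) := (\int[P]_om (sqnorm (X om - xstar))%:E)%E.
Let ED (X : Om -> 'rV[R]_d) := (\int[P]_om (bregman f G (X om) xstar)%:E)%E.
Let M eta t := 2 * eta ^+ 2 * (t0 - t)%:R * sigma2.

Lemma sqdist_integrable (X : Om -> 'rV[R]_d) : rV_measurable X -> (Ex X < +oo)%E ->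
  P.-integrable setT (EFin \o (fun om => sqnorm (X om - xstar))).
Proof.
move=> mX ExX; apply: ge0_EFin_integrable => // [|om]; last exact: sqnorm_ge0.
by apply: measurable_sqnorm; apply: rV_measurableB => //; exact: rV_measurable_cst.
Qed.

Lemma expected_descent eta X : 0 < eta -> eta <= 1 / (2 * L) ->
  rV_measurable X -> (Ex X < +oo)%E ->
  (Ew eta X + eta%:E * ED X <= Ex X + (2 * eta ^+ 2 * sigma2)%:E)%E.
Proof.
move=> eta0 etaL mX ExX.
set c := 2 * eta ^+ 2 * sigma2.
pose A om := sqnorm (X om - xstar).
have sum_le := @ge0_integral_superadditive _ _ _ P
  (fun om => \int[Q]_xi (sqnorm ((X om - eta *: gF xi (X om)) - (xstar - eta *: G xstar)))%:E)%E
  (fun om => eta%:E * (bregman f G (X om) xstar)%:E)%E (fun om => (A om + c)%:E).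
have scale_le := @le_ge0_integralZl _ _ _ P eta (fun om => (bregman f G (X om) xstar)%:E).
have cst_int : (\int[P]_om (A om + c)%:E = Ex X + c%:E)%E.
  rewrite integralD_EFin //; last exact: finite_measure_integrable_cst.
    rewrite integral_cst // -[in RHS](mule1 c%:E).
    by congr (_ + _ * _)%E; exact: probability_setT.
  exact: sqdist_integrable mX ExX.
rewrite -cst_int; apply: le_trans (sum_le _ _ _).
  by apply: leeD (lexx _) (scale_le (ltW eta0) _) => om; rewrite lee_fin bregman_ge0.
- by move=> om; apply: integral_ge0 => xi _; rewrite lee_fin sqnorm_ge0.
- by move=> om; apply: mule_ge0; rewrite lee_fin ?bregman_ge0 ?ltW.
- move=> om; apply: le_trans (leeD (expected_step_le (X om) eta0 etaL) (lexx _)) _.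
  rewrite -EFinM -EFinD lee_fin.
  by have := mulr_ge0 (ltW eta0) (bregman_ge0 (X om)); rewrite /A /c; lra.
Qed.

Lemma sgd_condition_convex eta t X : 0 < eta -> eta <= 1 / (2 * L) -> (t < t0)%N ->
  rV_measurable X -> (Ex X < +oo)%E ->
  (Ew eta X + (M eta t.+1)%:E <= Ex X - (1 * eta)%:E * ED X + (M eta t)%:E)%E.
Proof.
move=> eta0 etaL tt0 mX ExX.
have descent := expected_descent eta0 etaL mX ExX.
have Ew0 : (0 <= Ew eta X)%E.
  by apply: integral_ge0 => om _; apply: integral_ge0 => xi _; rewrite lee_fin sqnorm_ge0.
have etaED0 : (0 <= eta%:E * ED X)%E.
  apply: mule_ge0; first by rewrite lee_fin ltW.
  by apply: integral_ge0 => om _; rewrite lee_fin bregman_ge0.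
have Ex_fin : Ex X \is a fin_num.
  by rewrite ge0_fin_numE // integral_ge0 // => om _; rewrite lee_fin sqnorm_ge0.
have bound_fin : (Ex X + (2 * eta ^+ 2 * sigma2)%:E)%E \is a fin_num.
  by rewrite fin_numD Ex_fin.
have Ew_fin := ge0_fin_num_le Ew0 (le_trans (lee_paddr etaED0 (lexx _)) descent) bound_fin.
have etaED_fin := ge0_fin_num_le etaED0 (le_trans (lee_paddl Ew0 (lexx _)) descent) bound_fin.
have ED_fin : ED X \is a fin_num.
  have : ((eta^-1)%:E * (eta%:E * ED X))%E \is a fin_num by rewrite fin_numM.
  by rewrite muleA -EFinM mulVf ?gt_eqF // mul1e.
move: descent; rewrite -(fineK Ex_fin) -(fineK ED_fin) -(fineK Ew_fin) !lee_fin /M.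
have -> : (t0 - t)%:R = (t0 - t.+1)%:R + 1 :> R by rewrite -(subnSK tt0) mulrS addrC.
lra.
Qed.

Lemma sgd_condition_strongly_convex mu eta X : strongly_convex mu f G -> sigma2 = 0 ->
  0 < eta -> eta <= 1 / (2 * L) -> rV_measurable X -> (Ex X < +oo)%E ->
  (Ew eta X <= (1 - 1 * eta * mu)%:E * Ex X)%E.
Proof.
move=> f_sc sigma0 eta0 etaL mX ExX.
rewrite /Ex -integralZl //; last exact: sqdist_integrable mX ExX.
apply: le_ge0_integral => om; first by apply: integral_ge0 => xi _; rewrite lee_fin sqnorm_ge0.
apply: le_trans (expected_step_le (X om) eta0 etaL) _.
rewrite sigma0 /= -EFinM lee_fin.
have bregman_ge : mu / 2 * sqnorm (X om - xstar) <= bregman f G (X om) xstar.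
  by have := f_sc (X om) xstar; rewrite /bregman; lra.
have := ler_wpM2l (ltW eta0) bregman_ge; lra.
Qed.

End sgd.

Theorem lemma3
  (R : realType) (d : nat)
  (* the law of xi: a probability space (Xi, Q); xi is the identity *)
  (dXi : measure_display) (Xi : measurableType dXi) (Q : probability Xi R)
  (* the probability space carrying the iterate x^t *)
  (dO : measure_display) (Om : measurableType dO) (P : probability Om R)
  (F : Xi -> 'rV[R]_d -> R) (gF : Xi -> 'rV[R]_d -> 'rV[R]_d)
  (L : R) (t0 : nat) (xstar : 'rV[R]_d) (G : 'rV[R]_d -> 'rV[R]_d) :
  0 < L ->
  (* measurability of xi |-> f_xi(x) and xi |-> grad f_xi(x) *)
  (forall x, measurable_fun setT (fun xi => F xi x)) ->
  (forall x (i : 'I_d), measurable_fun setT (fun xi => gF xi x ord0 i)) ->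
  (* almost surely, f_xi is convex, differentiable with gradient gF xi, L-smooth *)
  {ae Q, forall xi, convex_fun (F xi) /\ gradient_of (F xi) (gF xi) /\
                    L_smooth L (F xi) (gF xi)} ->
  (* f(x) = E_xi f_xi(x) is well defined, and G is its gradient *)
  (forall x, Q.-integrable setT (fun xi => (F xi x)%:E)) ->
  gradient_of (fun x => Rintegral Q setT (fun xi => F xi x)) G ->
  (* sigma_*^2 < +oo *)
  (\int[Q]_xi (sqnorm (gF xi xstar - G xstar))%:E < +oo)%E ->
  let f := fun x => Rintegral Q setT (fun xi => F xi x) in
  let sigma2 := fine (\int[Q]_xi (sqnorm (gF xi xstar - G xstar))%:E) in
  (* E over (x^t, xi^t) with xi^t an independent copy of xi *)
  let Ew := fun (eta : R) (X : Om -> 'rV[R]_d) =>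
    (\int[P]_om \int[Q]_xi
        (sqnorm ((X om - eta *: gF xi (X om)) - (xstar - eta *: G xstar)))%:E)%E in
  let Ex := fun (X : Om -> 'rV[R]_d) =>
    (\int[P]_om (sqnorm (X om - xstar))%:E)%E in
  let ED := fun (X : Om -> 'rV[R]_d) =>
    (\int[P]_om (bregman f G (X om) xstar)%:E)%E in
  let M := fun (eta : R) (t : nat) => 2 * eta ^+ 2 * (t0 - t)%:R * sigma2 in
  (* part (a): eta_0 = 1/(4L), omega = 1, M^t = 2 eta^2 (t0 - t) sigma_*^2 *)
  (forall (eta : R), 0 < eta -> eta <= 1 / (4 * L) ->
   forall (t : nat), (t < t0)%N ->
   forall X : Om -> 'rV[R]_d,
     (forall i : 'I_d, measurable_fun setT (fun om => X om ord0 i)) ->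
     (Ex X < +oo)%E ->
     (Ew eta X + (M eta t.+1)%:E <=
        Ex X - (1 * eta)%:E * ED X + (M eta t)%:E)%E)
  /\
  (* part (b): f mu-strongly convex and sigma_* = 0: eta_0 = 1/(2L), omega = 1, M = 0 *)
  (forall mu : R, 0 < mu -> strongly_convex mu f G -> sigma2 = 0 ->
   forall (eta : R), 0 < eta -> eta <= 1 / (2 * L) ->
   forall X : Om -> 'rV[R]_d,
     (forall i : 'I_d, measurable_fun setT (fun om => X om ord0 i)) ->
     (Ex X < +oo)%E ->
     (Ew eta X <= (1 - 1 * eta * mu)%:E * Ex X)%E).
Proof.
(* Measurability of xi |-> F xi x is implied by its integrability. *)
move=> L_gt0 _ gF_measurable F_ae F_integrable f_gradient sigma2_finite.
move=> f sigma2 Ew Ex ED M.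
have quarter_le_half : 1 / (4 * L) <= 1 / (2 * L).
  by rewrite !div1r lef_pV2 ?posrE ?mulr_gt0 // ler_pM2r // ler_nat.
split=> [eta eta0 etaL t tt0 X mX ExX | mu _ f_sc sigma0 eta eta0 etaL X mX ExX].
  by apply: (sgd_condition_convex (L := L)) => //; exact: le_trans etaL quarter_le_half.
by apply: (sgd_condition_strongly_convex (L := L)) => //; exact: F_ae.
Qed.
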